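(* Let $\mathfrak p\in\mathcal F^*$ and let $N$ be an $R$-module with $\mathfrak pN=0$. Then: (a) $N$ is $\mathcal F$-torsion-free if and only if $N$ is torsion-free as a module over the domain $R/\mathfrak p$; (b) $N$ is $\mathcal F$-divisible if and only if $N$ is divisible as a module over the domain $R/\mathfrak p$.
   Context: Throughout, $R$ is a commutative Noetherian local ring and $\mathcal F$ is a Gabriel topology on $R$: a nonempty set of ideals of $R$ such that (1) if $\mathfrak a\in\mathcal F$ and $\mathfrak a\subseteq\mathfrak b$ then $\mathfrak b\in\mathcal F$; (2) if $\mathfrak a,\mathfrak b\in\mathcal F$ then $\mathfrak a\cap\mathfrak b\in\mathcal F$; (3) if $\mathfrak b$ is an ideal and there is $\mathfrak a\in\mathcal F$ with $(\mathfrak b:r)\in\mathcal F$ for all $r\in\mathfrak a$, then $\mathfrak b\in\mathcal F$. For an $R$-module $X$ and ideal $\mathfrak a$, $X[\mathfrak a]=\{x\in X:\mathfrak a x=0\}$. $X$ is $\mathcal F$-torsion-free if $X[\mathfrak a]=0$ for all $\mathfrak a\in\mathcal F$, and $\mathcal F$-divisible if $\mathfrak aX=X$ for all $\mathfrak a\in\mathcal F$. $\mathcal F^*$ denotes the set of maximal elements (under inclusion) of $\mathrm{Spec}(R)\setminus\mathcal F$. Over a domain $D$, a module $X$ is torsion-free if no nonzero element of $D$ annihilates a nonzero element of $X$, and divisible if $dX=X$ for all $0\ne d\in D$. *)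

From mathcomp Require Import all_boot all_order all_algebra.
Set Implicit Arguments. Unset Strict Implicit. Unset Printing Implicit Defensive.
Import GRing.Theory.
Local Open Scope ring_scope.

Section Defs.
Variable R : comNzRingType.

Definition ideal_sub (a b : R -> Prop) : Prop := forall x, a x -> b x.

Definition is_ideal (a : R -> Prop) : Prop :=
  a 0 /\ (forall x y, a x -> a y -> a (x + y)) /\ (forall r x, a x -> a (r * x)).

Definition is_prime_ideal (p : R -> Prop) : Prop :=
  is_ideal p /\ ~ p 1 /\ (forall x y, p (x * y) -> p x \/ p y).

Definition is_maximal_ideal (m : R -> Prop) : Prop :=
  is_ideal m /\ ~ m 1 /\
  (forall b, is_ideal b -> ~ b 1 -> ideal_sub m b -> ideal_sub b m).

Definition noetherian : Prop :=
  forall I : nat -> R -> Prop, (forall n, is_ideal (I n)) ->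
    (forall n, ideal_sub (I n) (I n.+1)) ->
    exists n, forall m, (n <= m)%N -> ideal_sub (I m) (I n).

Definition local_ring : Prop :=
  exists m, is_maximal_ideal m /\
    forall m', is_maximal_ideal m' -> ideal_sub m' m /\ ideal_sub m m'.

Definition ideal_cap (a b : R -> Prop) : R -> Prop := fun x => a x /\ b x.
Definition colon (b : R -> Prop) (r : R) : R -> Prop := fun x => b (x * r).

Definition gabriel_topology (F : (R -> Prop) -> Prop) : Prop :=
  (exists a, F a) /\
  (forall a, F a -> is_ideal a) /\
  (forall a b, F a -> is_ideal b -> ideal_sub a b -> F b) /\
  (forall a b, F a -> F b -> F (ideal_cap a b)) /\
  (forall a b, is_ideal b -> F a -> (forall r, a r -> F (colon b r)) -> F b).

Definition Fstar (F : (R -> Prop) -> Prop) (p : R -> Prop) : Prop :=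
  is_prime_ideal p /\ ~ F p /\
  (forall q, is_prime_ideal q -> ~ F q -> ideal_sub p q -> ideal_sub q p).

Variable M : lmodType R.

Definition annih (a : R -> Prop) (x : M) : Prop := forall r, a r -> r *: x = 0.

Definition F_torsion_free (F : (R -> Prop) -> Prop) : Prop :=
  forall a, F a -> forall x : M, annih a x -> x = 0.

Definition ideal_mod (a : R -> Prop) (x : M) : Prop :=
  exists s : seq (R * M), (forall u, u \in s -> a u.1) /\
    x = \sum_(u <- s) u.1 *: u.2.

Definition F_divisible (F : (R -> Prop) -> Prop) : Prop :=
  forall a, F a -> forall x : M, ideal_mod a x.

(* For p with pM = 0, M is an R/p-module via (r + p) . x = r *: x.
   Nonzero elements of R/p are the classes of r with ~ p r. *)
Definition killed_by (p : R -> Prop) : Prop := forall r, p r -> forall x : M, r *: x = 0.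

Definition quot_torsion_free (p : R -> Prop) : Prop :=
  forall r, ~ p r -> forall x : M, r *: x = 0 -> x = 0.

Definition quot_divisible (p : R -> Prop) : Prop :=
  forall r, ~ p r -> forall x : M, exists y : M, r *: y = x.

End Defs.

From mathcomp Require Import all_boot all_order all_algebra.
From mathcomp Require Import ring.
From Stdlib Require Import Classical ClassicalEpsilon.
Set Implicit Arguments. Unset Strict Implicit. Unset Printing Implicit Defensive.
Import GRing.Theory.
Local Open Scope ring_scope.

(* Proof of Lemma 1.2.  The heart is a ring-theoretic fact about Gabriel
   topologies on a Noetherian ring: an ideal [b] maximal among the ideals
   not in [F] is prime (if x, y lie outside b, then b + Rx is in F and
   every colon (b : z), z in b + Rx, contains b + Ry, which is in F, so
   axiom (3) would put b in F).  Hence every ideal outside F lies in a prime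
   outside F, and for p in F^* every ideal strictly above p belongs to F;
   in particular p + Rr is in F whenever r is not in p.  Conversely no ideal
   of F is contained in p.
   For a module N with pN = 0 the ideal p + Rr acts on N as r alone:
   N[p + Rr] is the r-torsion of N and (p + Rr)N = rN.  Both equivalences
   follow by testing F-torsion-freeness / F-divisibility on the ideals
   p + Rr, and conversely by picking in any a in F an element r not in p.
   The file proves general facts about ideals (adjoining an element, maximal
   members in a Noetherian ring), then the facts about Gabriel topologies,
   then the two module computations, and derives the theorem from them. *)

Section Ideals.
Variable R : comNzRingType.

Definition adjoin (b : R -> Prop) (x : R) : R -> Prop :=
  fun z => exists s t, b s /\ z = s + t * x.

Lemma adjoin_ideal (b : R -> Prop) (x : R) : is_ideal b -> is_ideal (adjoin b x).
Proof.
move=> [b0 [bD bM]]; split; [|split].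
- by exists 0, 0; split => //; rewrite mul0r addr0.
- move=> u v [s [t [bs ->]]] [s' [t' [bs' ->]]].
  by exists (s + s'), (t + t'); split; [exact: bD | ring].
- move=> r u [s [t [bs ->]]].
  by exists (r * s), (r * t); split; [exact: bM | ring].
Qed.

Lemma adjoin_sub (b : R -> Prop) (x : R) : ideal_sub b (adjoin b x).
Proof. by move=> s bs; exists s, 0; split => //; rewrite mul0r addr0. Qed.

Lemma adjoin_gen (b : R -> Prop) (x : R) : is_ideal b -> adjoin b x x.
Proof. by move=> [b0 _]; exists 0, 1; split => //; rewrite add0r mul1r. Qed.

Lemma colon_ideal (b : R -> Prop) (z : R) : is_ideal b -> is_ideal (colon b z).
Proof.
move=> [b0 [bD bM]]; rewrite /colon; split; [|split].
- by rewrite mul0r.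
- by move=> u v Hu Hv; rewrite mulrDl; apply: bD.
- by move=> r u Hu; rewrite -mulrA; apply: bM.
Qed.

(* In a Noetherian ring every nonempty family of ideals has a maximal member:
   otherwise dependent choice builds a strictly ascending chain. *)
Lemma noetherian_maximal (P : (R -> Prop) -> Prop) (a0 : R -> Prop) :
  noetherian R -> (forall b, P b -> is_ideal b) -> P a0 ->
  exists b, P b /\ forall c, P c -> ideal_sub b c -> ideal_sub c b.
Proof.
move=> noethR Pideal Pa0; apply: NNPP => no_max.
have grow (b : {b | P b}) : {c | P c /\ ideal_sub (sval b) c /\ ~ ideal_sub c (sval b)}.
  apply: constructive_indefinite_description; apply: NNPP => no_c.
  apply: no_max; exists (sval b); split; first exact: svalP.
  move=> c Pc sub_bc; apply: NNPP => not_cb; apply: no_c.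
  by exists c.
pose next (b : {b | P b}) : {b | P b} := exist _ _ (proj1 (svalP (grow b))).
pose I n := sval (iter n next (exist _ a0 Pa0)).
have [n stable] : exists n, forall m, (n <= m)%N -> ideal_sub (I m) (I n).
  apply: noethR => [k | k]; first exact/Pideal/svalP.
  exact: (proj1 (proj2 (svalP (grow _)))).
exact: (proj2 (proj2 (svalP (grow _)))) (stable n.+1 (leqnSn n)).
Qed.

End Ideals.

Section Gabriel.
Variables (R : comNzRingType) (F : (R -> Prop) -> Prop).
Hypothesis gabF : gabriel_topology F.

Lemma nonF_prime (b : R -> Prop) :
  is_ideal b -> ~ F b -> (forall x, ~ b x -> F (adjoin b x)) -> is_prime_ideal b.
Proof.
have [[c Fc] [_ [Fup [_ Fcolon]]]] := gabF.
move=> Ib nFb Fadj; have [b0 [bD bM]] := Ib.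
split; [done | split].
  move=> b1; apply: nFb; apply: (Fup c) => // z _.
  by rewrite -[z]mulr1; apply: bM.
move=> x y bxy; apply: NNPP => /not_or_and [nbx nby]; apply: nFb.
apply: (Fcolon (adjoin b x)) => //; first exact: Fadj.
move=> _ [s [t [bs ->]]].
apply: (Fup (adjoin b y)); [exact: Fadj | exact: colon_ideal |].
move=> _ [s' [t' [bs' ->]]]; rewrite /colon.
have -> : (s' + t' * y) * (s + t * x) =
          (s + t * x) * s' + (t' * y) * s + (t' * t) * (x * y) by ring.
exact: bD (bD _ _ (bM _ _ bs') (bM _ _ bs)) (bM _ _ bxy).
Qed.

Lemma nonF_below_prime (a : R -> Prop) :
  noetherian R -> is_ideal a -> ~ F a ->
  exists q, is_prime_ideal q /\ ~ F q /\ ideal_sub a q.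
Proof.
move=> noethR Ia nFa.
pose P b := is_ideal b /\ ideal_sub a b /\ ~ F b.
have [b [[Ib [ab nFb]] bmax]] := @noetherian_maximal _ P a noethR
  (fun b Pb => proj1 Pb) (conj Ia (conj (fun z h => h) nFa)).
exists b; split; last by split.
apply: nonF_prime => // x nbx; apply: NNPP => nFbx; apply: nbx.
have Pbx : P (adjoin b x).
  by split; [exact: adjoin_ideal | split => // z /ab; exact: adjoin_sub].
exact: bmax Pbx (@adjoin_sub _ b x) x (adjoin_gen x Ib).
Qed.

Lemma Fstar_above (p a : R -> Prop) :
  noetherian R -> Fstar F p ->
  is_ideal a -> ideal_sub p a -> ~ ideal_sub a p -> F a.
Proof.
move=> noethR [_ [_ pmax]] Ia pa not_ap; apply: NNPP => nFa.
have [q [Pq [nFq aq]]] := nonF_below_prime noethR Ia nFa.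
apply: not_ap => z az; exact: pmax q Pq nFq (fun w pw => aq w (pa w pw)) z (aq z az).
Qed.

Lemma F_meets_compl (p a : R -> Prop) :
  Fstar F p -> F a -> exists r, a r /\ ~ p r.
Proof.
have [_ [_ [Fup _]]] := gabF.
move=> [[Ip _] [nFp _]] Fa; apply: NNPP => no_r; apply: nFp.
apply: (Fup a) => // z az; apply: NNPP => npz.
by apply: no_r; exists z.
Qed.

End Gabriel.

Section Modules.
Variables (R : comNzRingType) (M : lmodType R) (p : R -> Prop).
Hypotheses (Ip : is_ideal p) (pM0 : killed_by M p).

Lemma ideal_mod_scale (a : R -> Prop) (r : R) (y : M) : a r -> ideal_mod a (r *: y).
Proof.
move=> ar; exists [:: (r, y)]; split; last by rewrite big_seq1.
by move=> u; rewrite inE => /eqP ->.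
Qed.

Lemma annih_adjoin (r : R) (x : M) : annih (adjoin p r) x <-> r *: x = 0.
Proof.
split; first by move=> ann; apply: ann; exact: adjoin_gen.
move=> rx _ [s [t [ps ->]]].
by rewrite scalerDl (pM0 ps) add0r -scalerA rx scaler0.
Qed.

Lemma ideal_mod_adjoin (r : R) (x : M) :
  ideal_mod (adjoin p r) x -> exists y, r *: y = x.
Proof.
move=> [l [inl ->]]; elim: l inl => [|u l IH] inl.
  by exists 0; rewrite big_nil scaler0.
have [y Hy] := IH (fun v vl => inl v (mem_behead (vl : v \in behead (u :: l)))).
have [s [t [ps Hu]]] := inl u (mem_head u l).
exists (t *: u.2 + y); rewrite big_cons -Hy Hu scalerDl (pM0 ps) add0r.
by rewrite scalerDr !scalerA mulrC.
Qed.

End Modules.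

Theorem lemma1p2 (R : comNzRingType) (F : (R -> Prop) -> Prop) (M : lmodType R)
  (p : R -> Prop) :
  noetherian R -> local_ring R -> gabriel_topology F ->
  Fstar F p -> killed_by M p ->
  (F_torsion_free M F <-> quot_torsion_free M p) /\
  (F_divisible M F <-> quot_divisible M p).
Proof.
move=> noethR _ gabF pFstar pM0.
have Ip : is_ideal p by case: pFstar => [[]].
have F_adjoin r : ~ p r -> F (adjoin p r).
  move=> npr; apply: (Fstar_above gabF noethR pFstar (adjoin_ideal r Ip)).
    exact: adjoin_sub.
  by move=> sub; apply: npr (sub r (adjoin_gen r Ip)).
split; split.
- move=> tf r npr x rx; apply: (tf _ (F_adjoin r npr)).
  exact/annih_adjoin.
- move=> qtf a Fa x ann; have [r [ar npr]] := F_meets_compl gabF pFstar Fa.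
  exact: qtf r npr x (ann r ar).
- move=> div r npr x; exact: ideal_mod_adjoin (div _ (F_adjoin r npr) x).
- move=> qdiv a Fa x; have [r [ar npr]] := F_meets_compl gabF pFstar Fa.
  have [y <-] := qdiv r npr x; exact: ideal_mod_scale.
Qed.
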